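(* Let $n\ge 1$, $d\ge 2$, and let $P\in\mathbb{C}[x_0,\dots,x_n]$ be a nonzero homogeneous polynomial of degree $d$. Then $$\mathrm{r}(P)\le (\mathrm{Cr}(P)-1)d+2-\mathrm{Cr}(P).$$
   Context: The rank $\mathrm{r}(P)$ of a degree $d$ form $P$ is the minimum $r$ such that $P=L_1^d+\cdots+L_r^d$ for some linear forms $L_1,\dots,L_r\in\mathbb{C}[x_0,\dots,x_n]$. Let $N=\binom{n+d}{d}-1$ and let $\nu_d:\mathbb{P}^n\to\mathbb{P}^N$ be the degree $d$ Veronese embedding, with image $X_{n,d}$; $[P]\in\mathbb{P}^N$ denotes the projective class of $P$ (so $\mathrm{r}(P)$ is the minimal number of points of $X_{n,d}$ whose linear span contains $[P]$). A zero-dimensional scheme $Z\subset\mathbb{P}^N$ is curvilinear if the Zariski tangent space at each point of its support has dimension $\le 1$ (equivalently, each connected component is of the form $\mathcal{O}_{C,Q}/\mathfrak{m}_Q^{e}$ for a smooth point $Q$ of a reduced curve $C$). The curvilinear rank is $\mathrm{Cr}(P)=\min\{\deg(Z): Z\subset X_{n,d}$ a zero-dimensional curvilinear scheme with $[P]\in\langle Z\rangle\}$, where $\langle Z\rangle$ is the linear span of $Z$. *)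

(* The complex numbers are modelled as R[i] = complex R for an
   arbitrary R : realType (every realType is a complete archimedean ordered
   field, i.e. a copy of the reals, so R[i] is a copy of C). *)
From mathcomp Require Import all_boot all_algebra.
From mathcomp Require Import reals.
From mathcomp.real_closed Require Import complex.
From mathcomp Require Import mpoly.
Set Implicit Arguments. Unset Strict Implicit. Unset Printing Implicit Defensive.
Import GRing.Theory Num.Theory.
Local Open Scope ring_scope.

Definition linform (C : comNzRingType) (n : nat) (v : 'rV[C]_n.+1)
  : {mpoly C[n.+1]} := \sum_(i < n.+1) v 0 i *: 'X_i.

(* Proportionality of vectors of C^{n+1} (same point of P^n when nonzero). *)
Definition proportional (C : comNzRingType) (n : nat) (v w : 'rV[C]_n.+1) : Prop :=
  exists a : C, w = a *: v.

Definition waring_decomp (C : comNzRingType) (n d r : nat) (P : {mpoly C[n.+1]}) : Prop :=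
  exists L : 'I_r -> 'rV[C]_n.+1, P = \sum_(i < r) (linform (L i)) ^+ d.

Definition is_rank (C : comNzRingType) (n d : nat) (P : {mpoly C[n.+1]}) (r : nat) : Prop :=
  waring_decomp d r P /\ forall r', waring_decomp d r' P -> (r <= r')%N.

(* A curvilinear connected component of length e supported at a point of P^n
   is (the image of) a closed embedding Spec C[t]/(t^e) -> P^n, given on the
   affine cone by a jet  gamma(t) = v_0 + v_1 t + ... + v_{e-1} t^{e-1}
   (a list [:: v_0; ...; v_{e-1}]) with v_0 <> 0 and, when e >= 2, v_1 not
   proportional to v_0 (nonzero tangent direction = closed embedding).
   Its image in X_{n,d} under nu_d is parametrized on the cone by
   (linform gamma(t))^d, a polynomial in t with coefficients degree-d forms. *)
Definition jet_form (C : comNzRingType) (n : nat) (s : seq 'rV[C]_n.+1)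
  : {poly {mpoly C[n.+1]}} :=
  \sum_(j < size s) (linform (nth 0 s j))%:P * 'X^j.

Definition curvilinear_jet (C : comNzRingType) (n : nat) (s : seq 'rV[C]_n.+1) : Prop :=
  (0 < size s)%N /\ nth 0 s 0 <> 0 /\
  ((1 < size s)%N -> ~ proportional (nth 0 s 0) (nth 0 s 1)).

(* A zero-dimensional curvilinear subscheme Z of X_{n,d} = nu_d(P^n), given as
   the list of its connected components (distinct supports). *)
Definition curvilinear_scheme (C : comNzRingType) (n : nat) (Z : seq (seq 'rV[C]_n.+1)) : Prop :=
  (forall i, (i < size Z)%N -> curvilinear_jet (nth [::] Z i)) /\
  (forall i j, (i < size Z)%N -> (j < size Z)%N -> i <> j ->
     ~ proportional (nth 0 (nth [::] Z i) 0) (nth 0 (nth [::] Z j) 0)).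

Definition scheme_degree (C : comNzRingType) (n : nat) (Z : seq (seq 'rV[C]_n.+1)) : nat :=
  sumn (map size Z).

(* [P] lies in the linear span <nu_d(Z)>: the span of a component of length e
   with jet gamma is spanned by the coefficients of t^0, ..., t^{e-1} of
   (linform gamma(t))^d, and the span of Z is the join of the spans of its
   components. *)
Definition in_span (C : comNzRingType) (n d : nat) (Z : seq (seq 'rV[C]_n.+1))
  (P : {mpoly C[n.+1]}) : Prop :=
  exists c : nat -> nat -> C,
    P = \sum_(i < size Z) \sum_(k < size (nth [::] Z i))
          c i k *: ((jet_form (nth [::] Z i)) ^+ d)`_k.

Definition curvilinear_decomp (C : comNzRingType) (n d r : nat) (P : {mpoly C[n.+1]}) : Prop :=
  exists Z : seq (seq 'rV[C]_n.+1),
    curvilinear_scheme Z /\ scheme_degree Z = r /\ in_span d Z P.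

Definition is_curvilinear_rank (C : comNzRingType) (n d : nat) (P : {mpoly C[n.+1]}) (c : nat) : Prop :=
  curvilinear_decomp d c P /\ forall c', curvilinear_decomp d c' P -> (c <= c')%N.

From mathcomp Require Import all_boot all_algebra all_field.
From mathcomp Require Import reals.
From mathcomp.real_closed Require Import complex.
From mathcomp Require Import mpoly.
From mathcomp Require Import zify ring.
Set Implicit Arguments. Unset Strict Implicit. Unset Printing Implicit Defensive.
Import GRing.Theory Num.Theory.
Local Open Scope ring_scope.

(* A component of length e of a curvilinear scheme is a jet
   gamma(t) = v_0 + ... + v_(e-1) t^(e-1); its span consists of the forms
   sum_(k<e) c_k F_k, where F(t) = linform(gamma(t))^d = sum_(k<=(e-1)d) F_k t^k.
   If nodes x_j and weights a_j (j < m) solve the moment problem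
   sum_j a_j x_j^k = c_k for k < e and = 0 for e <= k <= (e-1)d, that form equals
   sum_j a_j F(x_j), a sum of m d-th powers of linear forms.  Such a quadrature
   rule exists with m = (e-1)(d-1)+1 nodes, taken as the roots of a separable
   X^m + s B, where B inverts the reversed moment polynomial modulo X^e, so that
   the moment functional kills (X^m + s B) X^i for i < e-1.  Summing over the
   components, whose lengths add up to Cr(P), gives
   r(P) <= (Cr(P)-1)(d-1)+1. *)

Section FieldPolynomials.
Variable F : fieldType.

Lemma inverse_modXn (A : {poly F}) e : (0 < e)%N -> A`_0 != 0 ->
  exists2 B : {poly F}, (size B <= e)%N & forall j, (j < e)%N -> (A * B)`_j = (j == 0)%:R.
Proof.
move=> e_gt0 A0_neq0.
have : coprimep A 'X^e by rewrite coprimep_pexpr // coprimepX /root horner_coef0.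
case/Bezout_eq1_coprimepP => -[u v] /= Bezout_uv.
exists (u %% 'X^e).
  by have := ltn_modp u 'X^e; rewrite size_polyXn monic_neq0 ?monicXn.
have -> : A * (u %% 'X^e) = 1 - (v + A * (u %/ 'X^e)) * 'X^e.
  rewrite -Bezout_uv {2}(divp_eq u 'X^e).
  by move: (u %/ _) (u %% _) => u1 u0; ring.
by move=> j lt_je; rewrite coefB coef1 coefMXn lt_je subr0.
Qed.

Definition lagrange_poly m (x : 'I_m -> F) (j : 'I_m) : {poly F} :=
  (\prod_(i < m | i != j) (x j - x i))^-1 *: \prod_(i < m | i != j) ('X - (x i)%:P).

Lemma size_lagrange_poly m (x : 'I_m -> F) j : (size (lagrange_poly x j) <= m)%N.
Proof.
apply: leq_trans (size_scale_leq _ _) _.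
rewrite size_prod => [|i _]; last by rewrite polyXsubC_eq0.
rewrite (eq_bigr (fun=> 2%N)) => [|i _]; last by rewrite size_XsubC.
rewrite sum_nat_const cardC1 card_ord; case: m x j => [|m] x j; [by case: j | lia].
Qed.

Lemma horner_lagrange_poly m (x : 'I_m -> F) : injective x ->
  forall i j, (lagrange_poly x j).[x i] = (i == j)%:R.
Proof.
move=> x_inj i j; rewrite hornerZ horner_prod.
under eq_bigr do rewrite hornerXsubC.
have [->|neq_ij] := eqVneq i j.
  rewrite mulVf //; apply/prodf_neq0 => k neq_kj.
  by rewrite subr_eq0 (inj_eq x_inj) eq_sym.
by rewrite [X in _ * X](bigD1 i) //= subrr mul0r mulr0.
Qed.

Lemma lagrange_interpolation m (x : 'I_m -> F) (g : {poly F}) :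
  injective x -> (size g <= m)%N -> g = \sum_(j < m) g.[x j] *: lagrange_poly x j.
Proof.
move=> x_inj size_g; apply/eqP; rewrite -subr_eq0; apply/eqP.
set h := _ - _; apply/eqP/negPn/negP => h_neq0.
have : (size h <= m)%N.
  apply: leq_trans (size_polyD _ _) _; rewrite geq_max size_g size_polyN.
  apply: leq_trans (size_sum _ _ _) _; apply/bigmax_leqP => j _.
  exact: leq_trans (size_scale_leq _ _) (size_lagrange_poly x j).
apply/negP; rewrite -ltnNge.
have -> : m = size [seq x j | j <- enum 'I_m] by rewrite size_map size_enum_ord.
apply: (max_poly_roots h_neq0); last by rewrite map_inj_uniq ?enum_uniq.
apply/allP => _ /mapP[i _ ->]; rewrite /root /h hornerD hornerN horner_sum.
under eq_bigr do rewrite hornerZ horner_lagrange_poly //.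
rewrite (bigD1 i) //= eqxx mulr1 big1 ?addr0 ?subrr // => j neq_ji.
by rewrite eq_sym (negPf neq_ji) mulr0.
Qed.

Lemma quadrature m l (A : {poly F}) (x : 'I_m -> F) : injective x ->
  (forall j, (0 < j <= l)%N -> (A * \prod_(i < m) ('X - (x i)%:P))`_j = 0) ->
  exists a : 'I_m -> F, forall k, (k < m + l)%N ->
    \sum_(j < m) a j * x j ^+ k = (A * 'X^k)`_l.
Proof.
move=> x_inj Aq0; set q := \prod_(i < m) _ in Aq0.
pose phi g := (A * g)`_l.
have phi_sum N (c : 'I_N -> F) p :
    phi (\sum_(j < N) c j *: p j) = \sum_(j < N) c j * phi (p j).
  by rewrite /phi mulr_sumr coef_sum; apply: eq_bigr => j _; rewrite -scalerAr coefZ.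
have q_monic : q \is monic by apply: monic_prod_XsubC.
have size_q : size q = m.+1.
  by rewrite size_prod_XsubC [index_enum _]unlock -enumT size_enum_ord.
have q_x j : q.[x j] = 0 by rewrite horner_prod (bigD1 j) //= hornerXsubC subrr mul0r.
exists (fun j => phi (lagrange_poly x j)) => k lt_k_ml.
have size_mod : (size ('X^k %% q)%R <= m)%N.
  by have := ltn_modp 'X^k q; rewrite monic_neq0 // size_q.
have size_div : (size ('X^k %/ q)%R <= l)%N.
  by rewrite size_divp ?monic_neq0 // size_polyXn size_q; lia.
have phi_div : phi ('X^k %/ q * q) = 0.
  rewrite -[_ %/ q]coefK poly_def mulr_suml.
  under eq_bigr do rewrite -scalerAl.
  rewrite phi_sum big1 // => i _; rewrite /phi mulrCA coefXnM.
  have lt_il : (i < l)%N by apply: leq_trans (ltn_ord i) size_div.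
  by rewrite ltnNge (ltnW lt_il) /= Aq0 ?mulr0 // subn_gt0 lt_il leq_subr.
have -> : (A * 'X^k)`_l = phi ('X^k %% q).
  rewrite {1}(divp_eq 'X^k q) mulrDr coefD.
  by rewrite -[(A * (_ * q))`_l]/(phi _) phi_div add0r.
rewrite (lagrange_interpolation x_inj size_mod) phi_sum.
apply: eq_bigr => j _; rewrite mulrC; congr (_ * _).
by rewrite -hornerXn {1}(divp_eq 'X^k q) hornerD hornerM q_x mulr0 add0r.
Qed.

End FieldPolynomials.

Section ClosedFieldPolynomials.
Variable C : numClosedFieldType.

Lemma exists_notin_seq (S : seq C) : exists z, z \notin S.
Proof.
pose N := [seq k%:R : C | k <- iota 0 (size S).+1].
have uniq_N : uniq N.
  by rewrite map_inj_uniq ?iota_uniq // => a b /eqP; rewrite eqr_nat => /eqP.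
have /allPn[z _ zNS] : ~~ all (mem S) N.
  apply/negP => /allP/(uniq_leq_size uniq_N).
  by rewrite size_map size_iota ltnn.
by exists z.
Qed.

Lemma root_Xn_addZ_double m (B : {poly C}) s r : s != 0 ->
  root ('X^m + s *: B) r -> root ('X^m + s *: B)^`() r ->
  root ('X * B^`() - m%:R *: B) r.
Proof.
move=> s_neq0 /eqP q_r /eqP dq_r.
have X_dXn : 'X * ('X^m)^`() = m%:R *: 'X^m :> {poly C}.
  rewrite derivXn; case: m {q_r dq_r} => [|m]; first by rewrite mulr0n mulr0 scale0r.
  by rewrite mulrnAr -exprS scaler_nat.
have euler : 'X * ('X^m + s *: B)^`() - m%:R *: ('X^m + s *: B) =
    s *: ('X * B^`() - m%:R *: B).
  by rewrite derivD derivZ mulrDr X_dXn -!mul_polyC; ring.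
have : (s *: ('X * B^`() - m%:R *: B)).[r] = 0.
  by rewrite -euler hornerD hornerN hornerM hornerZ q_r dq_r !mulr0 subr0.
by rewrite hornerZ => /eqP; rewrite mulf_eq0 (negPf s_neq0).
Qed.

Lemma separable_Xn_addZ m (B : {poly C}) : (0 < m)%N -> (size B <= m)%N -> B`_0 != 0 ->
  exists s, exists2 x : 'I_m -> C,
    injective x & 'X^m + s *: B = \prod_(j < m) ('X - (x j)%:P).
Proof.
move=> m_gt0 size_B B0_neq0.
set T := 'X * B^`() - m%:R *: B.
have T0_neq0 : T`_0 != 0.
  by rewrite coefB coefXM eqxx coefZ sub0r oppr_eq0 mulf_neq0 // pnatr_eq0 -lt0n.
have [rsT T_eq] := closed_field_poly_normal T.
(* a double root r of 'X^m + s *: B is a root of T, with s = - r ^+ m / B.[r] *)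
have [s s_good] := exists_notin_seq (0 :: [seq - r ^+ m / B.[r] | r <- rsT]).
have s_neq0 : s != 0 by apply: contraNneq s_good => ->; rewrite mem_head.
set q := 'X^m + s *: B.
have size_sB : (size (s *: B) < size ('X^m : {poly C}))%N.
  by rewrite size_polyXn ltnS (leq_trans (size_scale_leq _ _)).
have [rs q_eq] := closed_field_poly_normal q.
rewrite lead_coefDl // lead_coefXn scale1r in q_eq.
have sep_q : separable_poly q.
  rewrite unlock; apply/Pdiv.ClosedField.coprimepP => r q_r; apply/negP => dq_r.
  have T_r : root T r := root_Xn_addZ_double s_neq0 q_r dq_r.
  have r_rsT : r \in rsT.
    move: T_r; rewrite T_eq rootZ ?lead_coef_eq0 ?root_prod_XsubC //.
    by apply: contraNneq T0_neq0 => ->; rewrite coef0.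
  have B_r : B.[r] != 0.
    apply: contraNneq T0_neq0 => B_r; move: q_r.
    rewrite /root hornerD hornerZ B_r mulr0 addr0 hornerXn expf_eq0 m_gt0 /=.
    by move/eqP=> r0; move: T_r; rewrite r0 /root horner_coef0.
  move: s_good; rewrite inE negb_or => /andP[_ /negP]; apply; apply/mapP.
  exists r => //; apply: (mulIf B_r); rewrite divfK //.
  by apply/eqP; rewrite -addr_eq0 addrC -hornerXn -hornerZ -hornerD.
have uniq_rs : uniq rs by rewrite -separable_prod_XsubC -q_eq.
have size_rs : size rs = m.
  by have := size_prod_XsubC rs id; rewrite -q_eq size_polyDl // size_polyXn => -[].
exists s, (fun j => rs`_j).
  by move=> i j /eqP; rewrite nth_uniq ?size_rs // => /eqP/val_inj.
by rewrite -/q q_eq (big_nth 0) big_mkord size_rs.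
Qed.

Lemma moment_problem e m (c : nat -> C) : (0 < e <= m)%N -> c e.-1 != 0 ->
  exists x a : 'I_m -> C, forall k, (k < m + e.-1)%N ->
    \sum_(j < m) a j * x j ^+ k = if (k < e)%N then c k else 0.
Proof.
move=> /andP[e_gt0 le_em] c_neq0.
(* the reversal of c: (A * 'X^k)`_e.-1 is c k for k < e and 0 beyond *)
pose A := \poly_(j < e) c (e.-1 - j)%N.
have A0_neq0 : A`_0 != 0 by rewrite coef_poly e_gt0 subn0.
have [B size_B AB] := inverse_modXn e_gt0 A0_neq0.
have B0_neq0 : B`_0 != 0.
  apply: contra_eq_neq (AB 0%N e_gt0) => B0.
  by rewrite coefM big_ord1 B0 mulr0 eq_sym oner_neq0.
have [s [x x_inj q_eq]] :=
  separable_Xn_addZ (leq_trans e_gt0 le_em) (leq_trans size_B le_em) B0_neq0.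
have [|a quad] := quadrature (l := e.-1) (A := A) x_inj.
  move=> j /andP[j_gt0 le_j].
  rewrite -q_eq mulrDr coefD mulrC coefXnM -scalerAr coefZ.
  by rewrite AB ?ifT ?(gtn_eqF j_gt0) ?mulr0 ?addr0 //; lia.
exists x, a => k lt_k; rewrite quad // mulrC coefXnM coef_poly.
have [lt_ke|le_ek] := ltnP k e; last by rewrite ifT //; lia.
by rewrite ifF ?ifT; [congr c| |]; lia.
Qed.

End ClosedFieldPolynomials.

Lemma coef_exp_addMXn (R : comNzRingType) (A B : {poly R}) d e k : (k < e)%N ->
  ((A + B * 'X^e) ^+ d)`_k = (A ^+ d)`_k.
Proof.
move=> lt_ke; suff [G ->] : exists G, (A + B * 'X^e) ^+ d = A ^+ d + G * 'X^e.
  by rewrite coefD coefMXn lt_ke addr0.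
elim: d => [|d [G IH]]; first by exists 0; rewrite mul0r addr0.
by exists (G * A + A ^+ d * B + G * B * 'X^e); rewrite !exprSr IH; ring.
Qed.

Lemma sumn_affine_pred_le (es : seq nat) b : (0 < b)%N -> all (leq 1) es -> es != [::] ->
  (sumn [seq e.-1 * b + 1 | e <- es] <= (sumn es).-1 * b + 1)%N.
Proof.
move=> b_gt0; elim: es => [|e es IH] //= /andP[e_gt0 es_gt0] _.
case: es => [|e' es] in IH es_gt0 *; first by rewrite /= !addn0.
have /= := IH es_gt0 isT; move: es_gt0 => /= /andP[e'_gt0 _].
move: (sumn _) (sumn _) => S S'; nia.
Qed.

Section WaringDecompositions.
Variables (C : numClosedFieldType) (n d : nat).
Implicit Types (s : seq 'rV[C]_n.+1) (P : {mpoly C[n.+1]}).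

Lemma linform_sum N (c : 'I_N -> C) (v : 'I_N -> 'rV[C]_n.+1) :
  linform (\sum_(j < N) c j *: v j) = \sum_(j < N) c j *: linform (v j).
Proof.
rewrite /linform (eq_bigr (fun i => \sum_(j < N) (c j * v j 0 i) *: 'X_i)) => [|i _].
  rewrite exchange_big /=; apply: eq_bigr => j _.
  by rewrite scaler_sumr; apply: eq_bigr => i _; rewrite scalerA.
by rewrite summxE scaler_suml; apply: eq_bigr => j _; rewrite mxE.
Qed.

Lemma linformZ (a : C) (v : 'rV[C]_n.+1) : linform (a *: v) = a *: linform v.
Proof. by rewrite /linform scaler_sumr; apply: eq_bigr => i _; rewrite mxE scalerA. Qed.

Lemma jet_formE s : jet_form s = \poly_(j < size s) linform (nth 0 s j).
Proof. by rewrite /jet_form poly_def; apply: eq_bigr => j _; rewrite mul_polyC. Qed.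

Lemma jet_form_rcons s v :
  jet_form (rcons s v) = jet_form s + (linform v)%:P * 'X^(size s).
Proof.
apply/polyP => k; rewrite !jet_formE coefD coefMXn !coef_poly coefC size_rcons nth_rcons.
have [lt_ks|le_sk] := ltnP k (size s); first by rewrite ltnS ltnW // addr0.
have [->|neq_ks] := eqVneq k (size s); first by rewrite ltnSn subnn add0r.
by rewrite ifF ?ifF ?addr0 //; lia.
Qed.

Lemma horner_jet_form s (t : C) :
  (jet_form s).[t%:MP] = linform (\sum_(j < size s) t ^+ j *: nth 0 s j).
Proof.
rewrite linform_sum /jet_form horner_sum; apply: eq_bigr => j _.
by rewrite hornerM hornerC hornerXn -rmorphXn /= mulrC mul_mpolyC.
Qed.

Lemma waring_decomp0 : waring_decomp d 0 (0 : {mpoly C[n.+1]}).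
Proof. by exists (fun=> 0); rewrite big_ord0. Qed.

Lemma waring_decompD r1 r2 P1 P2 :
  waring_decomp d r1 P1 -> waring_decomp d r2 P2 -> waring_decomp d (r1 + r2) (P1 + P2).
Proof.
move=> [L1 ->] [L2 ->].
exists (fun i => match split i with inl a => L1 a | inr b => L2 b end).
rewrite big_split_ord; congr (_ + _); apply: eq_bigr => i _.
  by rewrite (unsplitK (inl i)).
by rewrite (unsplitK (inr i)).
Qed.

Lemma sum_scale_horner N (F : {poly {mpoly C[n.+1]}}) m (a x : 'I_m -> C) :
  (size F <= N)%N ->
  \sum_(j < m) a j *: F.[(x j)%:MP] = \sum_(k < N) (\sum_(j < m) a j * x j ^+ k) *: F`_k.
Proof.
move=> size_F; under eq_bigr do rewrite (horner_coef_wide _ size_F) scaler_sumr.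
rewrite exchange_big; apply: eq_bigr => k _; rewrite scaler_suml; apply: eq_bigr => j _.
by rewrite -rmorphXn /= mulrC mul_mpolyC scalerA.
Qed.

Hypothesis d_gt1 : (1 < d)%N.

Lemma waring_jet_span_top s (cf : nat -> C) : (0 < size s)%N -> cf (size s).-1 != 0 ->
  waring_decomp d ((size s).-1 * d.-1 + 1)
    (\sum_(k < size s) cf k *: ((jet_form s) ^+ d)`_k).
Proof.
move=> s_gt0 cf_neq0; set e := size s in s_gt0 cf_neq0 *.
set m := (e.-1 * d.-1 + 1)%N; set D := (e.-1 * d)%N.
have e_m : (0 < e <= m)%N.
  by rewrite s_gt0 /m -{1}(prednK s_gt0) -addn1 leq_add2r leq_pmulr //; lia.
have [x [a moments]] := moment_problem e_m cf_neq0.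
set F := jet_form s ^+ d.
have size_F : (size F <= D.+1)%N.
  apply: leq_trans (size_poly_exp_leq _ _) _.
  by rewrite ltnS leq_mul2r -!subn1 leq_sub2r ?orbT // jet_formE size_poly.
exists (fun j => d.-root (a j) *: \sum_(l < e) x j ^+ l *: nth 0 s l).
have -> : \sum_(j < m) linform (d.-root (a j) *: \sum_(l < e) x j ^+ l *: nth 0 s l) ^+ d =
          \sum_(j < m) a j *: F.[(x j)%:MP].
  apply: eq_bigr => j _; rewrite linformZ exprZn rootCK; last by lia.
  by rewrite horner_exp horner_jet_form.
rewrite (sum_scale_horner _ _ size_F) (big_ord_widen D.+1 (fun k => cf k *: F`_k)); last first.
  by rewrite -{1}(prednK s_gt0) ltnS leq_pmulr //; lia.
have D_eq : D = (e.-1 * d.-1 + e.-1)%N by rewrite /D -{1}(prednK (ltnW d_gt1)) mulnS addnC.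
rewrite big_mkcond; apply: eq_bigr => -[k /= lt_kD] _; rewrite moments; last first.
  by move: lt_kD; rewrite D_eq /m; lia.
by case: ifP; rewrite ?scale0r.
Qed.

Lemma waring_jet_span s (cf : nat -> C) :
  exists2 r, (r <= (size s).-1 * d.-1 + 1)%N &
    waring_decomp d r (\sum_(k < size s) cf k *: ((jet_form s) ^+ d)`_k).
Proof.
elim/last_ind: s => [|s v [r le_r dec_r]].
  by exists 0%N; rewrite // big_ord0; exact: waring_decomp0.
have [cf_eq0|cf_neq0] := eqVneq (cf (size s)) 0; last first.
  exists ((size (rcons s v)).-1 * d.-1 + 1)%N => //.
  by apply: waring_jet_span_top; rewrite size_rcons.
rewrite size_rcons big_ord_recr /= cf_eq0 scale0r addr0.
exists r; first by apply: leq_trans le_r _; rewrite leq_add2r leq_mul2r leq_pred orbT.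
congr (waring_decomp _ _ _): dec_r.
by apply: eq_bigr => k _; rewrite jet_form_rcons coef_exp_addMXn.
Qed.

Lemma waring_in_span (Z : seq (seq 'rV[C]_n.+1)) (c : nat -> nat -> C) :
  exists2 r, (r <= sumn [seq (size s).-1 * d.-1 + 1 | s <- Z])%N &
    waring_decomp d r (\sum_(i < size Z) \sum_(k < size (nth [::] Z i))
                          c i k *: ((jet_form (nth [::] Z i)) ^+ d)`_k).
Proof.
elim: Z c => [|s Z IH] c; first by exists 0%N; rewrite // big_ord0; exact: waring_decomp0.
have [r1 le_r1 dec1] := waring_jet_span s (c 0%N).
have [r2 le_r2 dec2] := IH (fun i => c i.+1).
exists (r1 + r2)%N; first exact: leq_add.
by rewrite big_ord_recl; apply: waring_decompD.
Qed.

Lemma curvilinear_decomp_waring c P : P != 0 -> curvilinear_decomp d c P ->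
  (0 < c)%N /\ exists2 r, (r <= c.-1 * d.-1 + 1)%N & waring_decomp d r P.
Proof.
move=> P_neq0 [Z [[Z_jets _] [<- [cf P_eq]]]].
have Z_neq0 : Z != [::] by apply: contraNneq P_neq0 => Z0; rewrite P_eq Z0 big_ord0.
have sizes_gt0 : all (leq 1) [seq size s | s <- Z].
  apply/allP => _ /mapP[s s_Z ->].
  by have [] := Z_jets (index s Z); rewrite ?index_mem ?nth_index.
have sum_gt0 : (0 < scheme_degree Z)%N.
  by case: Z Z_neq0 sizes_gt0 {Z_jets P_eq} => // s Z _ /andP[s_gt0 _]; rewrite /= ltn_addr.
split=> //; have [r le_r dec_r] := waring_in_span Z cf.
exists r; last by rewrite P_eq.
have sizes_neq0 : [seq size s | s <- Z] != [::] by rewrite -size_eq0 size_map size_eq0.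
have pred_d_gt0 : (0 < d.-1)%N by rewrite ltn_predRL.
apply: leq_trans le_r _.
by have := sumn_affine_pred_le pred_d_gt0 sizes_gt0 sizes_neq0; rewrite -map_comp.
Qed.

End WaringDecompositions.

Unset Implicit Arguments.

Theorem theorem1 (R : realType) (n d : nat) (P : {mpoly R[i][n.+1]}) (r c : nat) :
  (1 <= n)%N -> (2 <= d)%N -> P != 0 -> P \is d.-homog ->
  is_rank d P r -> is_curvilinear_rank d P c ->
  (r%:Z <= (c%:Z - 1) * d%:Z + 2 - c%:Z)%R.
Proof.
move=> _ d_gt1 P_neq0 _ [_ rank_min] [dec_c _].
have [c_gt0 [r' le_r' dec_r']] := curvilinear_decomp_waring d_gt1 P_neq0 dec_c.
have le_r : (r <= c.-1 * d.-1 + 1)%N := leq_trans (rank_min _ dec_r') le_r'.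
have -> : (c%:Z - 1) * d%:Z + 2 - c%:Z = (c.-1 * d.-1 + 1)%N.
  rewrite -[in LHS](prednK c_gt0) -[in LHS](prednK (ltnW d_gt1)).
  by rewrite -[c.-1.+1]addn1 -[d.-1.+1]addn1 !PoszD PoszM; ring.
by rewrite lez_nat.
Qed.
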